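(* For each natural number $m\ge1$, the sequence $H(n)\bmod m$ is uniformly distributed in $\{0,1,\dots,m-1\}$: for every $j\in\{0,\dots,m-1\}$, $\frac1N\#\{1\le n\le N: H(n)\equiv j \pmod m\}\to\frac1m$ as $N\to\infty$.
   Context: $H$ is Hofstadter's $H$ sequence: $H(1)=1$ and $H(n)=n-H(H(H(n-1)))$ for $n>1$. *)

From Stdlib Require Import Reals List Arith.
Import ListNotations.

(* Hofstadter's H sequence: H(1)=1, H(n)=n-H(H(H(n-1))) for n>1.
   Hval 0 = 0 is a harmless placeholder (never used by the statement).
   hseq n = [H 0; H 1; ...; H n]; since 0 <= H k <= k, all lookups
   below are in range, so the default value of nth is never used. *)
Fixpoint hseq (n : nat) : list nat :=
  match n with
  | 0 => [0]
  | S k =>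
      let t := hseq k in
      let get i := nth i t 0 in
      let v := match k with
               | 0 => 1
               | _ => S k - get (get (get k))
               end in
      t ++ [v]
  end.

Definition H (n : nat) : nat := nth n (hseq n) 0.

Fixpoint count_res (m j N : nat) : nat :=
  match N with
  | 0 => 0
  | S N' => count_res m j N' + (if Nat.eqb (H (S N') mod m) j then 1 else 0)
  end.

(* Let A = narayana, the sequence 1, 1, 2, 3, 4, 6, 9, ... with A (i+3) = A (i+2) + A i.  H is
   self-similar along A: H (A (k+4) + x) = A (k+3) + H x for x <= A (k+3), which follows from
   the recursion by a strong induction carrying the bound H n <= A j for n <= A (j+1).
   Consequently the exponential sums S(N) = sum_{n <= N} e(h H(n) / m) satisfy
   S (A (k+4) + y) = S (A (k+4)) + e(h A(k+3) / m) S(y), so X_i = S (A i) obeys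
   X (i+3) = X (i+2) + e(h A(i+1) / m) X i.  If m does not divide h, no three consecutive
   h A i vanish mod m, and at such a term the triangle inequality loses a fixed fraction of
   A i; as the loss recurs in every window of a few steps, X_i = o(A i).  Writing N greedily
   in the A i gives S(N) = o(N) for 0 < h < m, and summing over h (orthogonality of the
   characters of Z/mZ) counts the n <= N with H n = j mod m. *)

From Stdlib Require Import Reals Arith Lia List Lra.
From Coquelicot Require Import Coquelicot.
Import ListNotations.
Open Scope nat_scope.

Lemma hseq_length (n : nat) : length (hseq n) = S n.
Proof. induction n as [|n IH]; [reflexivity|]. cbn [hseq]. rewrite length_app, IH; simpl; lia. Qed.

Lemma nth_hseq (n i : nat) : i <= n -> nth i (hseq n) 0 = H i.
Proof.
  induction n as [|n IH]; intros Hi.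
  - replace i with 0 by lia. reflexivity.
  - destruct (Nat.eq_dec i (S n)) as [->|Hne]; [reflexivity|].
    cbn [hseq]. rewrite app_nth1 by (rewrite hseq_length; lia). apply IH; lia.
Qed.

Lemma H_le (n : nat) : H n <= n.
Proof.
  destruct n as [|n]; [reflexivity|].
  unfold H; cbn [hseq]. rewrite app_nth2 by (rewrite hseq_length; lia).
  rewrite hseq_length, Nat.sub_diag. destruct n; cbn [nth]; lia.
Qed.

Lemma H_succ (n : nat) : H (S n) = S n - H (H (H n)).
Proof.
  unfold H at 1; cbn [hseq]. rewrite app_nth2 by (rewrite hseq_length; lia).
  rewrite hseq_length, Nat.sub_diag. destruct n as [|n]; [reflexivity|]. cbn [nth].
  pose proof (H_le (S n)) as Hle1. pose proof (H_le (H (S n))) as Hle2.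
  rewrite (nth_hseq (S n) (S n)), (nth_hseq (S n) (H (S n))), nth_hseq by lia.
  reflexivity.
Qed.

Lemma H_rec (n : nat) : 1 <= n -> H n = n - H (H (H (n - 1))).
Proof.
  intros Hn. destruct n as [|n]; [lia|].
  rewrite H_succ, Nat.sub_succ, Nat.sub_0_r. reflexivity.
Qed.

Lemma H3_le (n : nat) : H (H (H n)) <= n.
Proof.
  pose proof (H_le n) as Hle1. pose proof (H_le (H n)) as Hle2.
  pose proof (H_le (H (H n))) as Hle3.
  lia.
Qed.

(** * The Narayana sequence *)

(* Narayana's cows sequence shifted by one: 1, 1, 2, 3, 4, 6, 9, 13, 19, ... *)
Fixpoint narayana (n : nat) : nat :=
  match n with
  | 0 => 1
  | 1 => 1
  | 2 => 2
  | S ((S (S i)) as p) => narayana p + narayana i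
  end.

Lemma narayana_rec (i : nat) : narayana (i + 3) = narayana (i + 2) + narayana i.
Proof. rewrite !(Nat.add_comm i). reflexivity. Qed.

Lemma narayana_pos (i : nat) : 1 <= narayana i.
Proof.
  induction i as [i IH] using lt_wf_ind.
  destruct i as [|[|[|i]]]; [simpl; lia.. |].
  change (narayana (S (S (S i)))) with (narayana (S (S i)) + narayana i).
  pose proof (IH i) as Hi. lia.
Qed.

Lemma narayana_le_succ (i : nat) : narayana i <= narayana (S i).
Proof.
  destruct i as [|[|i]]; [simpl; lia.. |].
  change (narayana (S (S (S i)))) with (narayana (S (S i)) + narayana i). lia.
Qed.

Lemma narayana_mono (i j : nat) : i <= j -> narayana i <= narayana j.
Proof.
  induction 1 as [|j _ IH]; [lia|]. pose proof (narayana_le_succ j) as Hsucc. lia.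
Qed.

Lemma narayana_ge_id (i : nat) : i <= narayana i.
Proof.
  induction i as [i IH] using lt_wf_ind.
  destruct i as [|[|[|i]]]; [simpl; lia.. |].
  change (narayana (S (S (S i)))) with (narayana (S (S i)) + narayana i).
  pose proof (IH (S (S i))) as Hid. pose proof (narayana_pos i) as Hpos. lia.
Qed.

Lemma narayana_succ_le_double (i : nat) : narayana (S i) <= 2 * narayana i.
Proof.
  destruct i as [|[|i]]; [simpl; lia.. |].
  change (narayana (S (S (S i)))) with (narayana (S (S i)) + narayana i).
  pose proof (narayana_mono i (S (S i))) as Hmono. lia.
Qed.

Lemma narayana_add_le_pow2 (i t : nat) : narayana (i + t) <= 2 ^ t * narayana i.
Proof.
  induction t as [|t IH]; [rewrite Nat.add_0_r; simpl; lia|].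
  rewrite Nat.add_succ_r, Nat.pow_succ_r'. pose proof (narayana_succ_le_double (i + t)) as D.
  lia.
Qed.

Lemma narayana_bracket (K N : nat) : narayana K <= N ->
  exists k, K <= k /\ narayana k <= N < narayana (S k).
Proof.
  intros HK.
  assert (Hsearch : forall t, (exists k, K <= k /\ narayana k <= N < narayana (S k))
                              \/ narayana (K + t) <= N).
  { induction t as [|t [IH|IH]]; [right; rewrite Nat.add_0_r; exact HK | left; exact IH |].
    destruct (le_lt_dec (narayana (K + S t)) N) as [Hle|Hlt]; [right; exact Hle|].
    left. exists (K + t). rewrite <- Nat.add_succ_r. split; lia. }
  destruct (Hsearch (S N)) as [Hk|Habs]; [exact Hk|].
  pose proof (narayana_ge_id (K + S N)) as G. lia.
Qed.

Ltac simpl_index := rewrite <- ?Nat.add_assoc in *; cbn [Nat.add] in *.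

Lemma divide_or_not (m n : nat) : Nat.divide m n \/ ~ Nat.divide m n.
Proof.
  rewrite <- Nat.Lcm0.mod_divide.
  destruct (Nat.eq_dec (n mod m) 0); [left | right]; assumption.
Qed.

Lemma narayana_not_all_divisible (m h : nat) : ~ Nat.divide m h -> forall i,
  ~ (Nat.divide m (h * narayana i) /\ Nat.divide m (h * narayana (i + 1)) /\
     Nat.divide m (h * narayana (i + 2))).
Proof.
  intros Hh i. induction i as [|i IH]; intros [D0 [D1 D2]].
  - apply Hh. rewrite Nat.mul_1_r in D0. exact D0.
  - apply IH. replace (S i) with (i + 1) in * by lia. simpl_index.
    rewrite narayana_rec, Nat.mul_add_distr_l in D2.
    repeat split; [exact (Nat.divide_add_cancel_r _ _ _ D1 D2) | exact D0 | exact D1].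
Qed.

Lemma narayana_nondivisible_window (m h i : nat) : ~ Nat.divide m h ->
  exists s, s <= 2 /\ ~ Nat.divide m (h * narayana (i + s)).
Proof.
  intros Hh. pose proof (narayana_not_all_divisible m h Hh i) as Hnot.
  destruct (divide_or_not m (h * narayana (i + 0))) as [D0|D0]; [|exists 0; auto].
  destruct (divide_or_not m (h * narayana (i + 1))) as [D1|D1]; [|exists 1; auto].
  destruct (divide_or_not m (h * narayana (i + 2))) as [D2|D2]; [|exists 2; auto].
  rewrite Nat.add_0_r in D0. tauto.
Qed.

(** * Self-similarity of H *)

Definition H_shift_at (n : nat) : Prop :=
  forall k x, x <= narayana (k + 3) -> n = narayana (k + 4) + x ->
  H n = narayana (k + 3) + H x.

Definition H_bound_at (n : nat) : Prop :=
  forall j, n <= narayana (j + 1) -> H n <= narayana j.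

Section SelfSimilarityStep.

Variable N : nat.
Hypothesis IH : forall n, n < N -> H_shift_at n /\ H_bound_at n.

Lemma H3_shift (j z : nat) :
  z < narayana (j + 5) -> narayana (j + 6) + z < N ->
  H (H (H (narayana (j + 6) + z))) = narayana (j + 3) + H (H (H z)).
Proof.
  intros Hz HN.
  pose proof (narayana_rec (j + 3)) as E6. pose proof (narayana_rec (j + 2)) as E5.
  pose proof (narayana_rec (j + 1)) as E4. simpl_index.
  pose proof (H_le z) as Hz1. pose proof (H_le (H z)) as Hz2.
  destruct (IH z ltac:(lia)) as [_ Bz].
  destruct (IH (H z) ltac:(lia)) as [_ Bz1].
  assert (Hy1 : H z <= narayana (j + 4)) by (apply Bz; simpl_index; lia).
  assert (Hy2 : H (H z) <= narayana (j + 3)) by (apply Bz1; simpl_index; lia).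
  rewrite (proj1 (IH _ HN) (j + 2) z) by (simpl_index; lia). simpl_index.
  rewrite (proj1 (IH (narayana (j + 5) + H z) ltac:(lia)) (j + 1) (H z)) by (simpl_index; lia).
  simpl_index.
  rewrite (proj1 (IH (narayana (j + 4) + H (H z)) ltac:(lia)) j (H (H z))) by lia.
  reflexivity.
Qed.

Lemma H_shift_step : H_shift_at N.
Proof.
  intros k x Hx HN. rewrite HN.
  destruct (le_lt_dec k 2) as [Hk|Hk].
  - destruct k as [|[|[|k]]]; [..|lia]; simpl in Hx;
      do 7 (destruct x as [|x]; [first [lia | vm_compute; reflexivity]|]); lia.
  - replace k with ((k - 3) + 3) in * by lia. set (j := k - 3) in *. clearbody j. simpl_index.
    pose proof (narayana_rec (j + 4)) as E7. pose proof (narayana_rec (j + 3)) as E6.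
    pose proof (narayana_rec (j + 2)) as E5. pose proof (narayana_rec (j + 1)) as E4.
    pose proof (narayana_pos (j + 1)) as P1. pose proof (narayana_pos (j + 3)) as P3. simpl_index.
    destruct x as [|x].
    + (* H (A (j+4)) = A (j+3) pins down H^3 (A (j+4) - 1), which H3_shift transports. *)
      assert (HA4 : H (narayana (j + 4)) = narayana (j + 3) + H 0)
        by (apply (proj1 (IH (narayana (j + 4)) ltac:(lia))); lia).
      change (H 0) with 0 in HA4. rewrite H_rec in HA4 by lia.
      pose proof (H3_le (narayana (j + 4) - 1)) as H3le.
      rewrite Nat.add_0_r, H_rec by lia.
      replace (narayana (j + 7) - 1) with (narayana (j + 6) + (narayana (j + 4) - 1)) by lia.
      rewrite H3_shift by lia. change (H 0) with 0. lia.
    + rewrite H_rec by lia.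
      replace (narayana (j + 7) + S x - 1) with (narayana ((j + 1) + 6) + x) by (simpl_index; lia).
      rewrite H3_shift by (simpl_index; lia). simpl_index.
      rewrite H_succ. pose proof (H3_le x) as H3le. lia.
Qed.

Lemma H_bound_step : H_shift_at N -> H_bound_at N.
Proof.
  intros HS j. induction j as [|j IHj]; intros HN.
  - pose proof (H_le N) as Hle. simpl in HN. simpl. lia.
  - replace (S j + 1) with (j + 2) in HN by lia. rewrite <- Nat.add_1_r.
    destruct (le_lt_dec N (narayana (j + 1))) as [Hle|Hlt].
    { pose proof (IHj Hle) as Hj. pose proof (narayana_mono j (j + 1) ltac:(lia)) as Hmono. lia. }
    destruct (le_lt_dec j 2) as [Hj|Hj].
    { assert (HN2 : N = j + 2) by (destruct j as [|[|[|j]]]; simpl in *; lia).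
      rewrite HN2. destruct j as [|[|[|j]]]; [vm_compute; lia.. | lia]. }
    replace j with ((j - 3) + 3) in * by lia. set (i := j - 3) in *. clearbody i. simpl_index.
    pose proof (narayana_rec (i + 2)) as E5. pose proof (narayana_rec (i + 1)) as E4.
    pose proof (narayana_rec i) as E3. simpl_index.
    rewrite (HS i (N - narayana (i + 4))) by lia.
    destruct (IH (N - narayana (i + 4)) ltac:(pose proof (narayana_pos (i + 4)); lia)) as [_ B].
    pose proof (B (i + 1) ltac:(simpl_index; lia)) as Bx. lia.
Qed.

End SelfSimilarityStep.

Lemma H_shift_bound (n : nat) : H_shift_at n /\ H_bound_at n.
Proof.
  induction n as [n IH] using lt_wf_ind.
  pose proof (H_shift_step n IH) as HS. split; [exact HS | exact (H_bound_step n IH HS)].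
Qed.

Theorem H_narayana_shift (k x : nat) :
  x <= narayana (k + 3) -> H (narayana (k + 4) + x) = narayana (k + 3) + H x.
Proof. intros Hx. exact (proj1 (H_shift_bound _) k x Hx eq_refl). Qed.

Open Scope R_scope.

(** * Exponential sums *)

Definition cis (t : R) : C := (cos t, sin t).

Lemma cis_add (s t : R) : cis (s + t) = (cis s * cis t)%C.
Proof. unfold cis, Cmult; simpl. rewrite cos_plus, sin_plus. f_equal; ring. Qed.

Lemma Cmod_cis (t : R) : Cmod (cis t) = 1.
Proof.
  unfold Cmod, cis; simpl fst; simpl snd. rewrite <- sqrt_1, <- (sin2_cos2 t).
  f_equal. unfold Rsqr. ring.
Qed.

Section ExponentialSums.

Variables m h : nat.

Definition chi (q : nat) : C := cis (2 * PI * INR (h * q) / INR m).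

Lemma chi_add (p q : nat) : chi (p + q) = (chi p * chi q)%C.
Proof.
  unfold chi. rewrite <- cis_add. f_equal.
  rewrite Nat.mul_add_distr_l, plus_INR. unfold Rdiv. ring.
Qed.

Lemma Cmod_chi (q : nat) : Cmod (chi q) = 1.
Proof. apply Cmod_cis. Qed.

Fixpoint expsum (N : nat) : C :=
  match N with
  | O => 0%C
  | S n => (expsum n + chi (H (S n)))%C
  end.

Lemma Cmod_expsum_le (N : nat) : Cmod (expsum N) <= INR N.
Proof.
  induction N as [|N IH]; simpl expsum.
  - rewrite Cmod_0. apply Rle_refl.
  - rewrite S_INR. eapply Rle_trans; [apply Cmod_triangle|]. rewrite Cmod_chi. lra.
Qed.

Lemma expsum_narayana_shift (k y : nat) : (y <= narayana (k + 3))%nat ->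
  expsum (narayana (k + 4) + y) =
  (expsum (narayana (k + 4)) + chi (narayana (k + 3)) * expsum y)%C.
Proof.
  induction y as [|y IH]; intros Hy.
  - rewrite Nat.add_0_r. simpl expsum. ring.
  - rewrite Nat.add_succ_r. simpl expsum.
    rewrite <- Nat.add_succ_r, IH, H_narayana_shift, chi_add by lia. ring.
Qed.

Lemma expsum_narayana_rec (i : nat) : (2 <= i)%nat ->
  expsum (narayana (i + 3)) =
  (expsum (narayana (i + 2)) + chi (narayana (i + 1)) * expsum (narayana i))%C.
Proof.
  intros Hi. replace i with ((i - 2) + 2)%nat by lia.
  set (k := (i - 2)%nat). clearbody k. simpl_index.
  pose proof (narayana_rec (k + 2)) as E. pose proof (narayana_mono (k + 2) (k + 3)) as M.
  simpl_index. rewrite E. apply expsum_narayana_shift. lia.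
Qed.

End ExponentialSums.

Lemma cos_2PI_mod (m n : nat) : (0 < m)%nat ->
  cos (2 * PI * INR n / INR m) = cos (2 * PI * INR (n mod m) / INR m).
Proof.
  intros Hm. assert (Hm' : 0 < INR m) by (apply lt_0_INR; exact Hm).
  rewrite (Nat.div_mod_eq n m) at 1. rewrite plus_INR, mult_INR.
  replace (2 * PI * (INR m * INR (n / m) + INR (n mod m)) / INR m)
    with (2 * PI * INR (n mod m) / INR m + 2 * INR (n / m) * PI) by (field; lra).
  apply cos_period.
Qed.

Lemma cos_2PI_lt_1 (m r : nat) : (0 < r < m)%nat -> cos (2 * PI * INR r / INR m) < 1.
Proof.
  intros Hr.
  assert (Hm : 0 < INR m) by (apply lt_0_INR; lia).
  assert (Hr0 : 0 < INR r) by (apply lt_0_INR; lia).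
  assert (Hrm : INR r < INR m) by (apply lt_INR; lia).
  pose proof PI_RGT_0 as Hpi.
  replace (2 * PI * INR r / INR m) with (2 * (PI * INR r / INR m)) by (field; lra).
  rewrite cos_2a_sin.
  assert (Hsin : 0 < sin (PI * INR r / INR m)).
  { apply sin_gt_0.
    - apply Rdiv_lt_0_compat; nra.
    - apply Rmult_lt_reg_r with (INR m); [exact Hm|]. field_simplify; nra. }
  nra.
Qed.

Lemma finite_argmax (f : nat -> R) (n : nat) :
  exists i, (i <= n)%nat /\ forall j, (j <= n)%nat -> f j <= f i.
Proof.
  induction n as [|n [i [Hi Hmax]]].
  - exists 0%nat. split; [lia|]. intros j Hj. replace j with 0%nat by lia. lra.
  - destruct (Rle_dec (f (S n)) (f i)) as [Hle|Hgt].
    + exists i. split; [lia|]. intros j Hj.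
      destruct (Nat.eq_dec j (S n)) as [->|Hne]; [exact Hle | apply Hmax; lia].
    + exists (S n). split; [lia|]. intros j Hj.
      destruct (Nat.eq_dec j (S n)) as [->|Hne]; [lra|].
      pose proof (Hmax j ltac:(lia)). lra.
Qed.

Lemma cos_2PI_gap (m : nat) : (1 < m)%nat ->
  exists g, 0 < g /\ forall n, ~ Nat.divide m n -> cos (2 * PI * INR n / INR m) <= 1 - g.
Proof.
  intros Hm.
  destruct (finite_argmax (fun j => cos (2 * PI * INR (S j) / INR m)) (m - 2))
    as [i [Hi Hmax]].
  exists (1 - cos (2 * PI * INR (S i) / INR m)).
  split; [pose proof (cos_2PI_lt_1 m (S i) ltac:(lia)); lra|].
  intros n Hn. rewrite cos_2PI_mod by lia.
  assert (Hr : (0 < n mod m < m)%nat).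
  { split; [|apply Nat.mod_upper_bound; lia].
    destruct (Nat.eq_dec (n mod m) 0) as [E|E]; [|lia].
    exfalso. apply Hn, Nat.Lcm0.mod_divide, E. }
  replace (n mod m) with (S (n mod m - 1)) by lia.
  pose proof (Hmax (n mod m - 1)%nat ltac:(lia)). lra.
Qed.

Lemma one_plus_chi_gap (m h : nat) : (1 < m)%nat ->
  exists d, 0 < d /\ forall q, ~ Nat.divide m (h * q) -> Cmod (1 + chi m h q) <= 2 - d.
Proof.
  intros Hm. destruct (cos_2PI_gap m Hm) as [g [Hg Hcos]].
  exists (g / 2). split; [lra|]. intros q Hq.
  pose proof (Hcos _ Hq) as Hc. pose proof (COS_bound (2 * PI * INR (h * q) / INR m)) as Hb.
  pose proof (Cmod2_alt (1 + chi m h q)) as E. pose proof (Cmod_ge_0 (1 + chi m h q)) as P.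
  pose proof (sin2_cos2 (2 * PI * INR (h * q) / INR m)) as SC. unfold Rsqr in SC.
  unfold chi, cis in E, P |- *. simpl in E. nra.
Qed.

(** * Decay of the exponential sums *)

Lemma superadditive3_nonneg (u : nat -> R) (k : nat) :
  (forall i, (k <= i)%nat -> u (i + 2)%nat + u i <= u (i + 3)%nat) ->
  0 <= u k -> 0 <= u (k + 1)%nat -> 0 <= u (k + 2)%nat ->
  forall i, (k <= i)%nat -> 0 <= u i.
Proof.
  intros Hrec U0 U1 U2 i. induction i as [i IH] using lt_wf_ind. intros Hi.
  destruct (le_lt_dec i (k + 2)) as [Hle|Hlt].
  - assert (Hcases : i = k \/ i = (k + 1)%nat \/ i = (k + 2)%nat) by lia.
    destruct Hcases as [-> | [-> | ->]]; assumption.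
  - replace i with ((i - 3) + 3)%nat by lia.
    pose proof (Hrec (i - 3)%nat ltac:(lia)) as R3.
    pose proof (IH (i - 3 + 2)%nat ltac:(lia) ltac:(lia)) as I2.
    pose proof (IH (i - 3)%nat ltac:(lia) ltac:(lia)) as I0. lra.
Qed.

Section Decay.

Variables (m h : nat) (d : R).
Hypothesis h_nondiv : ~ Nat.divide m h.
Hypothesis d_pos : 0 < d.
Hypothesis gap : forall q, ~ Nat.divide m (h * q) -> Cmod (1 + chi m h q) <= 2 - d.

Let x (i : nat) : R := Cmod (expsum m h (narayana i)).
Let a (i : nat) : R := INR (narayana i).

Lemma d_le_2 : d <= 2.
Proof.
  pose proof (gap 1 ltac:(rewrite Nat.mul_1_r; exact h_nondiv)) as G.
  pose proof (Cmod_ge_0 (1 + chi m h 1)). lra.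
Qed.

Lemma a_rec (i : nat) : a (i + 3) = a (i + 2) + a i.
Proof. unfold a. rewrite narayana_rec, plus_INR. reflexivity. Qed.

Lemma a_ge_1 (i : nat) : 1 <= a i.
Proof. apply (le_INR 1), narayana_pos. Qed.

Lemma a_add_le (i t : nat) : a (i + t) <= 2 ^ t * a i.
Proof.
  unfold a. replace 2 with (INR 2) by reflexivity. rewrite <- pow_INR, <- mult_INR.
  apply le_INR, narayana_add_le_pow2.
Qed.

Lemma x_nonneg (i : nat) : 0 <= x i.
Proof. apply Cmod_ge_0. Qed.

Lemma x_le_a (i : nat) : x i <= a i.
Proof. apply Cmod_expsum_le. Qed.

Lemma x_subadditive (i : nat) : (2 <= i)%nat -> x (i + 3) <= x (i + 2) + x i.
Proof.
  intros Hi. unfold x. rewrite expsum_narayana_rec by exact Hi.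
  eapply Rle_trans; [apply Cmod_triangle|]. rewrite Cmod_mult, Cmod_chi. lra.
Qed.

Lemma x_gap (i : nat) : (2 <= i)%nat -> ~ Nat.divide m (h * narayana (i + 3)) ->
  x (i + 5) <= (2 - d) * x (i + 2) + x (i + 1) + x i.
Proof.
  intros Hi Hnd. unfold x.
  pose proof (expsum_narayana_rec m h (i + 2) ltac:(lia)) as R5.
  pose proof (expsum_narayana_rec m h (i + 1) ltac:(lia)) as R4.
  pose proof (expsum_narayana_rec m h i Hi) as R3. simpl_index.
  rewrite R5, R4, R3.
  set (S0 := expsum m h (narayana i)). set (S1 := expsum m h (narayana (i + 1))).
  set (S2 := expsum m h (narayana (i + 2))). set (c := chi m h (narayana (i + 3))).
  replace (S2 + chi m h (narayana (i + 1)) * S0 + chi m h (narayana (i + 2)) * S1 + c * S2)%C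
    with ((1 + c) * S2 + chi m h (narayana (i + 2)) * S1 + chi m h (narayana (i + 1)) * S0)%C
    by ring.
  eapply Rle_trans; [apply Cmod_triangle|].
  eapply Rle_trans; [apply Rplus_le_compat_r, Cmod_triangle|].
  rewrite !Cmod_mult, !Cmod_chi.
  pose proof (gap _ Hnd) as G. pose proof (Cmod_ge_0 S2) as P.
  fold c in G. nra.
Qed.

Lemma deficit_superadditive (B : R) (i : nat) : (2 <= i)%nat ->
  (B * a (i + 2) - x (i + 2)) + (B * a i - x i) <= B * a (i + 3) - x (i + 3).
Proof. intros Hi. rewrite (a_rec i). pose proof (x_subadditive i Hi). lra. Qed.

Lemma x_gap_deficit (q : nat) (B : R) : (2 <= q)%nat ->
  ~ Nat.divide m (h * narayana (q + 3)) -> (forall i, (q <= i)%nat -> x i <= B * a i) ->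
  d * B * a (q + 2) <= B * a (q + 5) - x (q + 5).
Proof.
  intros Hq Hnd Hx. pose proof (x_gap q Hq Hnd) as G. pose proof d_le_2 as Hd2.
  pose proof (Hx q (le_n q)) as X0. pose proof (Hx (q + 1)%nat ltac:(lia)) as X1.
  pose proof (Hx (q + 2)%nat ltac:(lia)) as X2.
  assert (X2' : (2 - d) * x (q + 2) <= (2 - d) * (B * a (q + 2)))
    by (apply Rmult_le_compat_l; lra).
  pose proof (a_rec (q + 2)) as A5. pose proof (a_rec (q + 1)) as A4. pose proof (a_rec q) as A3.
  simpl_index. rewrite A5, A4, A3. lra.
Qed.

(* The deficit B a - x inherits the superadditive recurrence, and after a gap it is at
   least a fixed fraction of a on three consecutive indices, hence from then on; the
   factor 32 = 2^5 comes from a (q+7) <= 2^5 a (q+2). *)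
Lemma x_improve (k : nat) (B : R) : (2 <= k)%nat ->
  (forall i, (k <= i)%nat -> x i <= B * a i) ->
  forall i, (k + 7 <= i)%nat -> x i <= B * (1 - d / 32) * a i.
Proof.
  intros Hk Hx.
  destruct (narayana_nondivisible_window m h (k + 3) h_nondiv) as [s [Hs Hnd]].
  replace (k + 3 + s)%nat with (k + s + 3)%nat in Hnd by lia.
  pose proof (x_gap_deficit (k + s) B ltac:(lia) Hnd ltac:(intros; apply Hx; lia)) as D5.
  pose proof (deficit_superadditive B (k + s + 3) ltac:(lia)) as D6.
  pose proof (deficit_superadditive B (k + s + 4) ltac:(lia)) as D7.
  pose proof (Hx (k + s + 3)%nat ltac:(lia)) as X3.
  pose proof (Hx (k + s + 4)%nat ltac:(lia)) as X4.
  pose proof (a_add_le (k + s + 2) 3) as A5. pose proof (a_add_le (k + s + 2) 4) as A6.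
  pose proof (a_add_le (k + s + 2) 5) as A7. simpl_index. simpl in A5, A6, A7.
  assert (HdB : 0 <= d * B).
  { pose proof (Hx k (le_n k)). pose proof (x_nonneg k). pose proof (a_ge_1 k). nra. }
  pose proof (a_ge_1 (k + (s + 2))) as A2.
  intros i Hi.
  enough (E : 0 <= B * a i - x i - d * B / 32 * a i) by lra.
  apply (superadditive3_nonneg (fun i => B * a i - x i - d * B / 32 * a i) (k + s + 5));
    [| | | | lia]; cbv beta; simpl_index.
  - intros j Hj. pose proof (deficit_superadditive B j ltac:(lia)) as Dj.
    rewrite (a_rec j) in *. lra.
  - nra.
  - nra.
  - nra.
Qed.

Lemma x_decay (t i : nat) : (2 + 7 * t <= i)%nat -> x i <= (1 - d / 32) ^ t * a i.
Proof.
  revert i. induction t as [|t IH]; intros i Hi.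
  - rewrite pow_O, Rmult_1_l. apply x_le_a.
  - rewrite <- tech_pow_Rmult, (Rmult_comm (1 - d / 32)).
    apply (x_improve (2 + 7 * t)); [lia | exact IH | lia].
Qed.

Lemma x_small (eps : R) : 0 < eps -> exists K, forall i, (K <= i)%nat -> x i <= eps * a i.
Proof.
  intros Heps. pose proof d_le_2 as Hd2.
  destruct (pow_lt_1_zero (1 - d / 32) ltac:(rewrite Rabs_right; lra) eps Heps) as [t Ht].
  exists (2 + 7 * t)%nat. intros i Hi.
  pose proof (x_decay t i Hi) as Dt. pose proof (Ht t (le_n t)) as Pt.
  pose proof (a_ge_1 i) as Ai. pose proof (Rle_abs ((1 - d / 32) ^ t)) as Abs. nra.
Qed.

Lemma expsum_small (eps : R) : 0 < eps ->
  exists C, forall N, Cmod (expsum m h N) <= eps * INR N + C.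
Proof.
  intros Heps. destruct (x_small eps Heps) as [K HK].
  exists (a (K + 4)). intro N. induction N as [N IH] using lt_wf_ind.
  destruct (le_lt_dec (narayana (K + 4)) N) as [HN|HN].
  - destruct (narayana_bracket (K + 4) N HN) as [k [Hk [Hlo Hhi]]].
    replace k with ((k - 4) + 4)%nat in * by lia. set (j := (k - 4)%nat) in *. clearbody j.
    pose proof (narayana_rec (j + 2)) as E5.
    pose proof (narayana_mono (j + 2) (j + 3) ltac:(lia)) as M.
    simpl_index. replace (S (j + 4)) with (j + 5)%nat in Hhi by lia.
    replace N with (narayana (j + 4) + (N - narayana (j + 4)))%nat by lia.
    rewrite expsum_narayana_shift by lia.
    eapply Rle_trans; [apply Cmod_triangle|]. rewrite Cmod_mult, Cmod_chi, plus_INR.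
    pose proof (HK (j + 4)%nat ltac:(lia)) as Xj.
    pose proof (IH (N - narayana (j + 4))%nat ltac:(pose proof (narayana_pos (j + 4)); lia)) as Iy.
    unfold x, a in Xj. lra.
  - pose proof (Cmod_expsum_le m h N) as B. apply lt_INR in HN. pose proof (pos_INR N).
    unfold a. nra.
Qed.

End Decay.

(** * Counting residues *)

Lemma sum_cos_telescope (t : R) (n : nat) :
  2 * sin (t / 2) * sum_f_R0 (fun i => cos (INR i * t)) n =
  sin ((INR n + 1 / 2) * t) + sin (t / 2).
Proof.
  induction n as [|n IH]; cbn [sum_f_R0].
  - simpl INR. rewrite Rmult_0_l, cos_0. replace ((0 + 1 / 2) * t) with (t / 2) by field. ring.
  - rewrite Rmult_plus_distr_l, IH, S_INR.
    replace ((INR n + 1 + 1 / 2) * t) with ((INR n + 1) * t + t / 2) by field.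
    replace ((INR n + 1 / 2) * t) with ((INR n + 1) * t - t / 2) by field.
    rewrite sin_plus, sin_minus. ring.
Qed.

Lemma sum_Re_chi (m q : nat) : (0 < m)%nat ->
  sum_f_R0 (fun h => Re (chi m h q)) (m - 1) = if (q mod m =? 0)%nat then INR m else 0.
Proof.
  intros Hm. assert (Hm' : 0 < INR m) by (apply lt_0_INR; exact Hm).
  unfold chi, cis, Re; simpl fst.
  destruct (Nat.eqb_spec (q mod m) 0) as [E|E].
  - rewrite (sum_eq _ (fun _ => 1)), sum_cte.
    + replace (S (m - 1)) with m by lia. ring.
    + intros h _. rewrite cos_2PI_mod by exact Hm.
      rewrite Nat.Div0.mul_mod, E, Nat.mul_0_r, Nat.Div0.mod_0_l. simpl INR.
      rewrite Rmult_0_r, Rdiv_0_l. apply cos_0.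
  - set (t := 2 * PI * INR q / INR m).
    rewrite (sum_eq _ (fun h => cos (INR h * t)))
      by (intros h _; rewrite mult_INR; unfold t; f_equal; field; lra).
    assert (Hsin : sin (t / 2) <> 0).
    { intros Hs. pose proof (Nat.mod_upper_bound q m ltac:(lia)) as Hr.
      pose proof (cos_2PI_lt_1 m (q mod m) ltac:(lia)) as Hlt.
      rewrite <- cos_2PI_mod in Hlt by exact Hm. fold t in Hlt.
      replace t with (2 * (t / 2)) in Hlt by field. rewrite cos_2a_sin, Hs in Hlt. lra. }
    pose proof (sum_cos_telescope t (m - 1)) as T.
    rewrite minus_INR in T by lia. simpl INR in T.
    replace ((INR m - 1 + 1 / 2) * t) with (- (t / 2) + 2 * INR q * PI) in T
      by (unfold t; field; lra).
    rewrite sin_period, sin_neg, Rplus_opp_l in T.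
    apply Rmult_eq_reg_l with (2 * sin (t / 2)); [rewrite T; ring | lra].
Qed.

Lemma sub_add_mod_eqb_0 (m j y : nat) : (j < m)%nat ->
  ((m - j + y) mod m =? 0)%nat = (y mod m =? j)%nat.
Proof.
  intros Hj. rewrite <- Nat.Div0.add_mod_idemp_r.
  pose proof (Nat.mod_upper_bound y m ltac:(lia)) as Hr. set (r := (y mod m)%nat) in *.
  destruct (le_lt_dec j r) as [Hle|Hlt].
  - replace (m - j + r)%nat with ((r - j) + 1 * m)%nat by lia.
    rewrite Nat.Div0.mod_add, Nat.mod_small by lia.
    destruct (Nat.eqb_spec (r - j) 0), (Nat.eqb_spec r j); lia.
  - rewrite Nat.mod_small by lia.
    destruct (Nat.eqb_spec (m - j + r) 0), (Nat.eqb_spec r j); lia.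
Qed.

Lemma count_res_fourier (m j N : nat) : (0 < m)%nat -> (j < m)%nat ->
  INR m * INR (count_res m j N) = sum_f_R0 (fun h => Re (chi m h (m - j) * expsum m h N)) (m - 1).
Proof.
  intros Hm Hj. induction N as [|N IH].
  - simpl expsum. rewrite (sum_eq _ (fun _ => 0)), sum_cte; [simpl; ring|].
    intros h _. rewrite Cmult_0_r. reflexivity.
  - cbn [count_res expsum].
    erewrite sum_eq by (intros h _; rewrite Cmult_plus_distr_l, re_plus, <- chi_add; reflexivity).
    rewrite sum_plus, <- IH, sum_Re_chi, sub_add_mod_eqb_0, plus_INR by assumption.
    destruct (H (S N) mod m =? j)%nat; simpl; ring.
Qed.

Lemma Un_cv_sum_f_R0 (u : nat -> nat -> R) (l : nat -> R) (n : nat) :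
  (forall h, (h <= n)%nat -> Un_cv (u h) (l h)) ->
  Un_cv (fun N => sum_f_R0 (fun h => u h N) n) (sum_f_R0 l n).
Proof.
  induction n as [|n IH]; intros Hcv; cbn [sum_f_R0].
  - apply Hcv. lia.
  - apply CV_plus; [apply IH; intros h Hh|]; apply Hcv; lia.
Qed.

Lemma sum_f_R0_indicator_0 (c : R) (n : nat) :
  sum_f_R0 (fun h => if (h =? 0)%nat then c else 0) n = c.
Proof. induction n as [|n IH]; cbn [sum_f_R0]; [reflexivity | rewrite IH; simpl; ring]. Qed.

Lemma Un_cv_div_INR_0 (v : nat -> R) :
  (forall eps, 0 < eps -> exists C, forall N, Rabs (v N) <= eps * INR N + C) ->
  Un_cv (fun N => v N / INR N) 0.
Proof.
  intros Hv eps Heps.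
  destruct (Hv (eps / 2) ltac:(lra)) as [C HC].
  destruct (INR_archimed (eps / 2) C ltac:(lra)) as [N0 HN0].
  exists (Nat.max N0 1). intros N HN. unfold Rdist. rewrite Rminus_0_r.
  assert (HN1 : 1 <= INR N) by (apply (le_INR 1); lia).
  assert (HNN0 : INR N0 <= INR N) by (apply le_INR; lia).
  unfold Rdiv. rewrite Rabs_mult, Rabs_inv, (Rabs_right (INR N)) by lra.
  pose proof (HC N) as HCN. apply (Rmult_lt_reg_r (INR N)); [lra|].
  rewrite Rmult_assoc, Rinv_l by lra. nra.
Qed.

Lemma chi_0_l (m q : nat) : chi m 0 q = 1%C.
Proof.
  unfold chi, cis. rewrite Nat.mul_0_l. simpl INR.
  rewrite Rmult_0_r, Rdiv_0_l, cos_0, sin_0. reflexivity.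
Qed.

Lemma expsum_0_l (m N : nat) : expsum m 0 N = RtoC (INR N).
Proof.
  induction N as [|N IH]; cbn [expsum]; [reflexivity|].
  rewrite IH, chi_0_l, S_INR, RtoC_plus. reflexivity.
Qed.

(* [chi m h (m - j)] is e(-h j / m). *)
Definition weyl_term (m j h N : nat) : R :=
  Re (chi m h (m - j) * expsum m h N) / INR m / INR N.

Lemma count_res_ratio (m j N : nat) : (0 < m)%nat -> (j < m)%nat ->
  INR (count_res m j N) / INR N = sum_f_R0 (fun h => weyl_term m j h N) (m - 1).
Proof.
  intros Hm Hj. assert (Hm' : 0 < INR m) by (apply lt_0_INR; exact Hm).
  unfold weyl_term.
  rewrite (sum_eq _ (fun h => Re (chi m h (m - j) * expsum m h N) * (/ INR m * / INR N)))
    by (intros h _; unfold Rdiv; ring).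
  rewrite <- scal_sum, <- count_res_fourier by assumption.
  transitivity ((/ INR m * INR m) * (INR (count_res m j N) / INR N)).
  - rewrite Rinv_l by lra. ring.
  - unfold Rdiv. ring.
Qed.

Lemma weyl_term_0_cv (m j : nat) : (0 < m)%nat -> Un_cv (weyl_term m j 0) (1 / INR m).
Proof.
  intros Hm eps Heps. exists 1%nat. intros N HN.
  assert (Hm' : 0 < INR m) by (apply lt_0_INR; exact Hm).
  assert (HN' : 1 <= INR N) by (apply (le_INR 1); exact HN).
  unfold weyl_term, Rdist. rewrite chi_0_l, expsum_0_l, Cmult_1_l, re_RtoC.
  replace (INR N / INR m / INR N - 1 / INR m) with 0 by (field; lra).
  rewrite Rabs_R0. exact Heps.
Qed.

Lemma weyl_term_cv_0 (m j h : nat) : (0 < h < m)%nat -> Un_cv (weyl_term m j h) 0.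
Proof.
  intros Hh. assert (Hm' : 1 <= INR m) by (apply (le_INR 1); lia).
  assert (Hnd : ~ Nat.divide m h) by (intros D; apply Nat.divide_pos_le in D; lia).
  destruct (one_plus_chi_gap m h ltac:(lia)) as [d [Hd Hgap]].
  apply Un_cv_div_INR_0. intros eps Heps.
  destruct (expsum_small m h d Hnd Hd Hgap eps Heps) as [C HC]. exists C. intros N.
  pose proof (re_le_Cmod (chi m h (m - j) * expsum m h N)) as Hre.
  rewrite Cmod_mult, Cmod_chi, Rmult_1_l in Hre.
  assert (Hinv : 0 < / INR m <= 1).
  { split; [apply Rinv_0_lt_compat; lra | rewrite <- Rinv_1; apply Rinv_le_contravar; lra]. }
  unfold Rdiv. rewrite Rabs_mult, (Rabs_right (/ INR m)) by lra.
  pose proof (HC N) as HCN. pose proof (Rabs_pos (Re (chi m h (m - j) * expsum m h N))). nra.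
Qed.

Theorem mainTheorem8 :
  forall m j : nat, (1 <= m)%nat -> (j < m)%nat ->
    Un_cv (fun N : nat => INR (count_res m j N) / INR N) (1 / INR m).
Proof.
  intros m j Hm Hj.
  apply Un_cv_ext with (fun N => sum_f_R0 (fun h => weyl_term m j h N) (m - 1)).
  { intros N. symmetry. apply count_res_ratio; lia. }
  rewrite <- (sum_f_R0_indicator_0 (1 / INR m) (m - 1)).
  apply Un_cv_sum_f_R0. intros [|h] Hh; simpl.
  - apply weyl_term_0_cv. lia.
  - apply weyl_term_cv_0. lia.
Qed.
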